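(* For every finite graph $G$, $\mathrm{cw}(G) \leq 2^{\mathrm{mcw}(G)}$.
   Context: A $k$-expression is built from: atoms $i(v)$ creating a vertex $v$ with label $i\in\{1,\dots,k\}$; $\eta_{i,j}$ ($i\neq j$) adding an edge between every vertex labeled $i$ and every vertex labeled $j$; $\rho_{i\to j}$ changing every label $i$ to $j$; and $\oplus$, disjoint union. The generated graph is obtained by deleting labels. The clique-width $\mathrm{cw}(G)$ is the smallest $k$ such that $G$ is generated by a $k$-expression. A multi-$k$-expression is built as follows, where each vertex carries a (possibly empty) set of labels from $\{1,\dots,k\}$: atoms $m\langle i_1,\dots,i_\ell\rangle$ (with $m$ a positive integer and $i_1<\dots<i_\ell\le k$, possibly $\ell=0$) create $m$ vertices, each with label set $\{i_1,\dots,i_\ell\}$; $\eta_{i,j}$ creates an edge between every vertex having label $i$ and every vertex having label $j$, allowed only when no vertex has both labels $i$ and $j$; $\rho_{i\to S}$ for $S\subseteq\{1,\dots,k\}$ replaces label $i$ by the set $S$ (a vertex with label set $S'\ni i$ gets $(S'\setminus\{i\})\cup S$); $\varepsilon_i$ deletes label $i$ from all vertices; $\oplus$ is disjoint union. The generated graph is obtained by deleting all labels. The multi-clique-width $\mathrm{mcw}(G)$ is the smallest $k$ such that $G$ is generated by a multi-$k$-expression. *)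

From mathcomp Require Import all_boot.
Set Implicit Arguments. Unset Strict Implicit. Unset Printing Implicit Defensive.

(* Labelled graphs produced by (multi-)k-expressions: vertices are 'I_nv,
   each vertex carries a label of type L ('I_k for k-expressions,
   {set 'I_k} for multi-k-expressions); adj is the (symmetric) edge relation. *)
Record lgraph (L : Type) := LGraph { nv : nat; lab : 'I_nv -> L; adj : rel 'I_nv }.
Arguments LGraph {L} nv lab adj.
Arguments nv {L} l.
Arguments lab {L} l _.
Arguments adj {L} l _ _.

Definition lunion L (g1 g2 : lgraph L) : lgraph L :=
  LGraph (nv g1 + nv g2)
    (fun x => match split x with inl a => lab g1 a | inr b => lab g2 b end)
    (fun x y => match split x, split y with
                | inl a, inl b => adj g1 a b
                | inr a, inr b => adj g2 a b
                | _, _ => false end).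

Definition ladd L (P Q : pred L) (g : lgraph L) : lgraph L :=
  LGraph (nv g) (lab g)
    (fun x y => [|| adj g x y, P (lab g x) && Q (lab g y) | Q (lab g x) && P (lab g y)]).

Definition lrelab L (f : L -> L) (g : lgraph L) : lgraph L :=
  LGraph (nv g) (fun x => f (lab g x)) (adj g).

Inductive kexp (k : nat) : Type :=
| KAtom of 'I_k
| KEta of 'I_k & 'I_k & kexp k
| KRho of 'I_k & 'I_k & kexp k
| KUnion of kexp k & kexp k.

Fixpoint keval k (t : kexp k) : option (lgraph 'I_k) :=
  match t with
  | KAtom i => Some (LGraph 1 (fun _ => i) (fun _ _ => false))
  | KEta i j t => if i == j then None
                  else omap (ladd (pred1 i) (pred1 j)) (keval t)
  | KRho i j t => omap (lrelab (fun l => if l == i then j else l)) (keval t)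
  | KUnion t1 t2 => match keval t1, keval t2 with
                    | Some g1, Some g2 => Some (lunion g1 g2)
                    | _, _ => None end
  end.

Inductive mexp (k : nat) : Type :=
| MAtom of nat & {set 'I_k}
| MEta of 'I_k & 'I_k & mexp k
| MRho of 'I_k & {set 'I_k} & mexp k
| MEps of 'I_k & mexp k
| MUnion of mexp k & mexp k.

Fixpoint meval k (t : mexp k) : option (lgraph {set 'I_k}) :=
  match t with
  | MAtom m A => if m is 0 then None
                 else Some (LGraph m (fun _ => A) (fun _ _ => false))
  | MEta i j t =>
      match meval t with
      | Some g => if [forall x : 'I_(nv g), ~~ ((i \in lab g x) && (j \in lab g x))]
                  then Some (ladd (fun B : {set 'I_k} => i \in B) (fun B : {set 'I_k} => j \in B) g)
                  else None
      | None => None end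
  | MRho i A t =>
      omap (lrelab (fun S' : {set 'I_k} => if i \in S' then (S' :\ i) :|: A else S')) (meval t)
  | MEps i t => omap (lrelab (fun S' : {set 'I_k} => S' :\ i)) (meval t)
  | MUnion t1 t2 => match meval t1, meval t2 with
                    | Some g1, Some g2 => Some (lunion g1 g2)
                    | _, _ => None end
  end.

Definition lgraph_iso L (g : lgraph L) (T : finType) (e : rel T) : Prop :=
  exists f : 'I_(nv g) -> T, bijective f /\ forall x y, adj g x y = e (f x) (f y).

Definition kgen (k : nat) (T : finType) (e : rel T) : Prop :=
  exists (t : kexp k) g, keval t = Some g /\ lgraph_iso g e.

Definition mgen (k : nat) (T : finType) (e : rel T) : Prop :=
  exists (t : mexp k) g, meval t = Some g /\ lgraph_iso g e.

Definition is_cw (T : finType) (e : rel T) (c : nat) : Prop :=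
  kgen c e /\ forall k, k < c -> ~ kgen k e.

Definition is_mcw (T : finType) (e : rel T) (c : nat) : Prop :=
  mgen c e /\ forall k, k < c -> ~ mgen k e.

(* A multi-k-expression can be simulated by a 2^k-expression whose
   labels are the label sets {set 'I_k}.  Disjoint unions and atoms translate
   directly; eta_{i,j} becomes the sequence of all eta_{A,B} with i in A, j in B
   and A != B (no vertex carries a set containing both i and j, so no edge is
   lost); rho_{i -> S} and epsilon_i act on label sets by idempotent maps F, and
   an idempotent relabelling is realised by the sequence of rho_{A -> F A} over
   all sets A. *)

From mathcomp Require Import all_boot.

Set Implicit Arguments.
Unset Strict Implicit.
Unset Printing Implicit Defensive.

Section KExpressions.

Variable n : nat.

Definition liso (g : lgraph 'I_n) (T : finType) (A : rel T) (lb : T -> 'I_n) :=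
  exists f : 'I_(nv g) -> T,
    [/\ bijective f, forall x y, adj g x y = A (f x) (f y) & forall x, lab g x = lb (f x)].

Lemma liso_eq g (T : finType) (A A' : rel T) (lb lb' : T -> 'I_n) :
  A =2 A' -> lb =1 lb' -> liso g A lb -> liso g A' lb'.
Proof.
by move=> eqA eqlb [f [fbij fadj flab]]; exists f; split=> // x *; rewrite ?fadj ?flab.
Qed.

Definition etas (s : seq ('I_n * 'I_n)) (t : kexp n) : kexp n :=
  foldr (fun p t => KEta p.1 p.2 t) t s.

Lemma keval_etas s t g (T : finType) (A : rel T) lb :
  all (fun p => p.1 != p.2) s -> keval t = Some g -> liso g A lb ->
  exists2 g', keval (etas s t) = Some g' &
    liso g' (fun x y => [|| A x y, (lb x, lb y) \in s | (lb y, lb x) \in s]) lb.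
Proof.
elim: s => [|[a b] s IHs] /=.
  by move=> _ -> giso; exists g => //; apply: liso_eq giso => // x y; rewrite !orbF.
case/andP=> neq_ab s_ok tg giso.
have [g1 -> [f [fbij fadj flab]]] := IHs s_ok tg giso.
rewrite (negbTE neq_ab) /=; eexists; first reflexivity.
exists f; split=> // x y /=; rewrite fadj !flab !in_cons !xpair_eqE.
by case: (A _ _); case: (_ \in s); case: (_ \in s); case: (lb _ == a);
  case: (lb _ == b); case: (lb _ == a); case: (lb _ == b).
Qed.

Definition rhos (phi : 'I_n -> 'I_n) (r : seq 'I_n) (t : kexp n) : kexp n :=
  foldr (fun a t => KRho a (phi a) t) t r.

(* Idempotence is what makes the order of the successive rho's irrelevant. *)
Lemma keval_rhos phi r t g (T : finType) (A : rel T) lb :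
  idempotent_fun phi -> keval t = Some g -> liso g A lb ->
  exists2 g', keval (rhos phi r t) = Some g' &
    liso g' A (fun x => if lb x \in r then phi (lb x) else lb x).
Proof.
move=> phi_idem; elim: r => [|a r IHr] /=.
  by move=> -> giso; exists g.
move=> tg giso; have [g1 -> [f [fbij fadj flab]]] := IHr tg giso.
eexists; first reflexivity.
exists f; split=> // x /=; rewrite flab in_cons.
case: (lb (f x) =P a) => [->|/eqP neq_a] /=; first by case: (a \in r); rewrite ?eqxx // if_same.
case: (lb (f x) \in r); last by rewrite (negbTE neq_a).
by case: eqP => // <-; exact: phi_idem.
Qed.

Fixpoint katoms (a : 'I_n) (m : nat) : kexp n :=
  if m is m'.+1 then KUnion (KAtom a) (katoms a m') else KAtom a.

Lemma keval_katoms a m :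
  exists2 g, keval (katoms a m) = Some g &
    [/\ nv g = m.+1, forall x, lab g x = a & forall x y, adj g x y = false].
Proof.
elim: m => [|m [g /= -> [nv_g lab_g adj_g]]] /=; first by eexists.
eexists; first reflexivity.
split=> /= [|x|x y]; first by rewrite nv_g.
  by case: (split x).
by case: (split x) => ?; case: (split y).
Qed.

End KExpressions.

Lemma liso_lunion n (L : Type) (code : L -> 'I_n) (g1' g2' : lgraph 'I_n) (g1 g2 : lgraph L) :
  liso g1' (adj g1) (fun x => code (lab g1 x)) ->
  liso g2' (adj g2) (fun x => code (lab g2 x)) ->
  liso (lunion g1' g2') (adj (lunion g1 g2)) (fun x => code (lab (lunion g1 g2) x)).
Proof.
case=> f1 [[h1 f1K h1K] f1adj f1lab]; case=> f2 [[h2 f2K h2K] f2adj f2lab].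
pose sum_map n1 n2 m1 m2 (u : 'I_n1 -> 'I_m1) (v : 'I_n2 -> 'I_m2) (x : 'I_(n1 + n2)) :=
  unsplit (match split x with inl a => inl (u a) | inr b => inr (v b) end) : 'I_(m1 + m2).
exists (sum_map _ _ _ _ f1 f2); split.
- exists (sum_map _ _ _ _ h1 h2) => x; rewrite /sum_map unsplitK -[RHS]splitK;
    by case: (split x) => a /=; rewrite ?f1K ?f2K ?h1K ?h2K.
- by move=> x y; rewrite /= /sum_map !unsplitK; case: (split x) => a; case: (split y).
- by move=> x; rewrite /= /sum_map !unsplitK; case: (split x).
Qed.

Definition kexpressible (L : finType) (g : lgraph L) : Prop :=
  exists t : kexp #|L|,
    exists2 g', keval t = Some g' & liso g' (adj g) (fun x => enum_rank (lab g x)).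

Section Kexpressible.

Variable L : finType.

Lemma kexpressible_atoms m (a : L) :
  kexpressible (LGraph m.+1 (fun _ => a) (fun _ _ => false)).
Proof.
have [g tg [nv_g lab_g adj_g]] := keval_katoms (enum_rank a) m.
exists (katoms (enum_rank a) m), g => //.
exists (cast_ord nv_g); split=> [|x y|x]; rewrite ?adj_g ?lab_g //.
by exists (cast_ord (esym nv_g)) => x; rewrite ?cast_ordK ?cast_ordKV.
Qed.

Lemma kexpressible_lunion (g1 g2 : lgraph L) :
  kexpressible g1 -> kexpressible g2 -> kexpressible (lunion g1 g2).
Proof.
case=> t1 [g1' tg1 iso1] [t2 [g2' tg2 iso2]].
exists (KUnion t1 t2), (lunion g1' g2'); first by rewrite /= tg1 tg2.
exact: liso_lunion.
Qed.

Lemma kexpressible_ladd (P Q : pred L) (g : lgraph L) :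
  (forall x, ~~ (P (lab g x) && Q (lab g x))) ->
  kexpressible g -> kexpressible (ladd P Q g).
Proof.
move=> PQ_disj [t [g' tg giso]].
pose s := [seq p <- enum {: 'I_#|L| * 'I_#|L|} |
           [&& P (enum_val p.1), Q (enum_val p.2) & p.1 != p.2]].
have s_ok : all (fun p => p.1 != p.2) s by apply/allP=> p; rewrite mem_filter => /andP[/and3P[]].
have mem_s a b : ((a, b) \in s) = [&& P (enum_val a), Q (enum_val b) & a != b].
  by rewrite mem_filter mem_enum andbT.
have [g'' tg' g'iso] := keval_etas s_ok tg giso.
exists (etas s t), g'' => //; apply: liso_eq g'iso => // x y /=.
have mem_lab u v : [&& P (lab g u), Q (lab g v) & lab g u != lab g v] = P (lab g u) && Q (lab g v).
  case Pu: (P _); case Qv: (Q _) => //=.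
  by apply/eqP=> euv; move: (PQ_disj u); rewrite Pu euv Qv.
rewrite !mem_s !enum_rankK !(inj_eq enum_rank_inj) !mem_lab.
by rewrite [P (lab g y) && _]andbC.
Qed.

Lemma kexpressible_lrelab (F : L -> L) (g : lgraph L) :
  idempotent_fun F -> kexpressible g -> kexpressible (lrelab F g).
Proof.
move=> F_idem [t [g' tg giso]].
pose phi (l : 'I_#|L|) := enum_rank (F (enum_val l)).
have phi_idem : idempotent_fun phi.
  by move=> l; rewrite /phi /= enum_rankK; congr enum_rank; exact: F_idem.
have [g'' tg' g'iso] := keval_rhos (enum 'I_#|L|) phi_idem tg giso.
exists (rhos phi (enum 'I_#|L|) t), g'' => //; apply: liso_eq g'iso => // x.
by rewrite /= mem_enum /phi enum_rankK.
Qed.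

Lemma kexpressible_kgen (g : lgraph L) (T : finType) (e : rel T) :
  kexpressible g -> lgraph_iso g e -> kgen #|L| e.
Proof.
case=> t [g' tg [f [fbij fadj _]]] [h [hbij hadj]].
exists t, g'; split=> //; exists (h \o f); split; first exact: bij_comp.
by move=> x y; rewrite fadj hadj.
Qed.

End Kexpressible.

Lemma meval_kexpressible k (t : mexp k) g : meval t = Some g -> kexpressible g.
Proof.
elim: t g => [[|m] A|i j t IHt|i A t IHt|i t IHt|t1 IHt1 t2 IHt2] g //=.
- by case=> <-; exact: kexpressible_atoms.
- case tg: (meval t) => [g0|//]; case: forallP => // disj [<-].
  exact: kexpressible_ladd (IHt _ tg).
- case tg: (meval t) => [g0|//] [<-]; apply: kexpressible_lrelab (IHt _ tg) => S /=.
  case iS: (i \in S); last by rewrite iS.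
  case iA: (i \in A).
    rewrite !inE iA orbT; apply/setP=> x; rewrite !inE.
    by case: (x == i); case: (x \in S); case: (x \in A).
  by rewrite !inE eqxx iA.
- case tg: (meval t) => [g0|//] [<-]; apply: kexpressible_lrelab (IHt _ tg) => S /=.
  by apply/setP=> x; rewrite !inE andbA andbb.
- case tg1: (meval t1) => [g1|//]; case tg2: (meval t2) => [g2|//] [<-].
  exact: kexpressible_lunion (IHt1 _ tg1) (IHt2 _ tg2).
Qed.

Lemma card_set_ord k : #|{set 'I_k}| = 2 ^ k.
Proof.
rewrite -cardsT.
have -> : [set: {set 'I_k}] = powerset [set: 'I_k].
  by apply/setP=> B; rewrite !inE subsetT.
by rewrite card_powerset cardsT card_ord.
Qed.

Theorem mainTheorem2 (T : finType) (e : rel T)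
  (e_sym : symmetric e) (e_irr : irreflexive e) (c m : nat) :
  is_cw e c -> is_mcw e m -> c <= 2 ^ m.
Proof.
case=> _ cw_min [[t [g [tg giso]]] _].
have gen : kgen (2 ^ m) e.
  by rewrite -card_set_ord; exact: kexpressible_kgen (meval_kexpressible tg) giso.
by rewrite leqNgt; apply/negP => lt_2m_c; exact: cw_min lt_2m_c gen.
Qed.
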